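(* Let $n$ be a positive integer such that $n$ is odd and $n\not\equiv 1 \pmod 3$. Then the $n$-th Catalan number $C_n=\frac{1}{n+1}\binom{2n}{n}$ is divisible by $n+2$.
   Context: The Catalan numbers are $C_n=\frac{1}{n+1}\binom{2n}{n}=\frac{(2n)!}{(n+1)!\,n!}$ for $n\ge 0$. *)

From mathcomp Require Import all_boot.

(* n-th Catalan number C_n = (1/(n+1)) * binom(2n, n); the division is exact. *)
Definition catalan (n : nat) : nat := 'C(n.*2, n) %/ n.+1.

From mathcomp Require Import all_boot.
From mathcomp Require Import zify.

(* From (n + 2) C_{n+1} = 2 (2n + 1) C_n: if n + 2 is coprime to 2 (2n + 1)
   then it divides C_n.  Since 2n + 1 + (n + 2) = 3 (n + 1), the only possible
   common factor of n + 2 and 2n + 1 is 3, which divides n + 2 exactly when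
   n = 1 mod 3; and n + 2 is coprime to 2 exactly when n is odd. *)

Lemma succn_dvdn_bin_double n : n.+1 %| 'C(n.*2, n).
Proof.
have n_bin_double : n.+1 %| n * 'C(n.*2, n).
  by rewrite -[X in X * _](addnK n n) addnn -mul_bin_left dvdn_mulr.
by rewrite -(Gauss_dvdr _ (coprimeSn n)).
Qed.

Lemma mul_succn_catalan n : n.+1 * catalan n = 'C(n.*2, n).
Proof. by rewrite mulnC divnK // succn_dvdn_bin_double. Qed.

Lemma mul_bin_doubleS n :
  n.+1 * 'C(n.+1.*2, n.+1) = 2 * n.*2.+1 * 'C(n.*2, n).
Proof.
have bin_diag := mul_bin_diag n.+1.*2 n.
have bin_down := mul_bin_down n.*2.+1 n.
have sub_n : n.*2.+1 - n = n.+1 by lia.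
rewrite doubleS /= in bin_diag; rewrite /= sub_n in bin_down.
apply/eqP; rewrite -(eqn_pmul2l (ltn0Sn n)) -bin_diag -doubleS -mul2n.
by rewrite -!mulnA bin_down.
Qed.

Lemma catalanS n : n.+2 * catalan n.+1 = 2 * n.*2.+1 * catalan n.
Proof.
apply/eqP; rewrite -(eqn_pmul2l (ltn0Sn n)) mul_succn_catalan.
by rewrite mul_bin_doubleS mulnCA mul_succn_catalan.
Qed.

Lemma coprime_succ2_doubleS n : coprime n.+2 n.*2.+1 = (n %% 3 != 1).
Proof.
have -> : coprime n.+2 n.*2.+1 = coprime n.+2 (n.+1 * 3).
  by rewrite /coprime -gcdnDr; congr (gcdn _ _ == 1); lia.
rewrite /coprime Gauss_gcdr ?coprimeSn // -/(coprime _ _) coprime_sym.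
by rewrite prime_coprime //; congr (~~ _); apply/idP/eqP; lia.
Qed.

Theorem theorem2p1 (n : nat) :
  0 < n -> odd n -> n %% 3 != 1 -> n.+2 %| catalan n.
Proof.
move=> _ n_odd n_mod3.
have coprime_factor : coprime n.+2 (2 * n.*2.+1).
  by rewrite coprimeMr coprimen2 /= n_odd coprime_succ2_doubleS.
by rewrite -(Gauss_dvdr _ coprime_factor) -catalanS dvdn_mulr.
Qed.
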